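(* For all planar forests $F,G$, the following are equivalent: (1) $\langle F,G\rangle\neq0$; (2) $\langle F,G\rangle=1$; (3) $m(G)\leq F$.
   Context: Let $K$ be a field. Planar rooted trees have their children linearly ordered left to right; a planar forest is a finite, possibly empty, sequence $t_1\cdots t_n$ of planar rooted trees ($1$ = empty forest). $\mathcal{H}$ is the free associative unital $K$-algebra on planar rooted trees, with basis the planar forests and product concatenation. $B^+(F)$ is the tree obtained by grafting the trees of $F$ on a new common root; $\varepsilon(F)=\delta_{F,1}$. $\Delta$ is the unique linear map with $\Delta(1)=1\otimes1$, $\Delta(xy)=(x\otimes1)\Delta(y)+\Delta(x)(1\otimes y)-x\otimes y$, $\Delta(B^+(x))=B^+(x)\otimes 1+(\mathrm{Id}\otimes B^+)\Delta(x)$. $\gamma$ is linear with $\gamma(t_1\cdots t_n)=\delta_{t_1,\bullet}t_2\cdots t_n$ ($\bullet$ the one-vertex tree), $\gamma(1)=0$. $\langle-,-\rangle$ is the unique bilinear form with $\langle1,x\rangle=\varepsilon(x)$, $\langle xy,z\rangle=\langle y\otimes x,\Delta(z)\rangle$ (with $\langle a\otimes b,c\otimes d\rangle=\langle a,c\rangle\langle b,d\rangle$), $\langle B^+(x),y\rangle=\langle x,\gamma(y)\rangle$. $m$ is the map on planar forests defined recursively by $m(1)=1$, $m(B^+(F_1)F_2)=B^+(m(F_2))m(F_1)$. Order on forests: an admissible transformation chooses a vertex $s$ which is the leftmost child of its parent $u$; if $u$ is not a root, with parent $r$, the subtree rooted at $s$ is moved to become a child of $r$ immediately to the left of $u$;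 if $u$ is a root, the subtree rooted at $s$ becomes a new tree immediately to the left of the tree of $u$; everything else unchanged. $F\leq G$ iff $G$ is obtained from $F$ by a finite (possibly empty) sequence of admissible transformations. *)

From mathcomp Require Import all_boot all_algebra.
From Stdlib Require Import Relations.

Set Implicit Arguments.
Unset Strict Implicit.
Unset Printing Implicit Defensive.

Import GRing.Theory.
Local Open Scope ring_scope.

(* Planar rooted trees: a root with a linearly ordered (left to right)
   sequence of subtrees.  A planar forest is a finite sequence of trees;
   the empty forest [::] is the unit 1 of H. *)
Inductive ptree : Type := Node : seq ptree -> ptree.
Definition pforest := seq ptree.

Definition Bplus (F : pforest) : ptree := Node F.
Definition pt : ptree := Node [::].

Definition eps (K : fieldType) (G : pforest) : K :=
  match G with [::] => 1 | _ => 0 end.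

(* gamma on basis forests: Some G' encodes the basis element G', None encodes 0 *)
Definition gamma (G : pforest) : option pforest :=
  match G with Node [::] :: G' => Some G' | _ => None end.

(* Coproduct of a basis forest, as a formal sum of terms c * (a (x) b),
   computed from  Delta(1) = 1(x)1,
   Delta(B^+(x)) = B^+(x)(x)1 + (Id (x) B^+) Delta(x),
   Delta(x y) = (x(x)1) Delta(y) + Delta(x) (1(x)y) - x(x)y
   (used with x = the first tree, y = the remaining forest). *)
Fixpoint deltaT (K : fieldType) (t : ptree) : seq (K * pforest * pforest) :=
  match t with
  | Node F =>
    let fix deltaF (F : pforest) : seq (K * pforest * pforest) :=
      match F with
      | [::] => [:: (1, [::], [::])]
      | t' :: F' =>
          [seq (c.1.1, t' :: c.1.2, c.2) | c <- deltaF F']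
          ++ [seq (c.1.1, c.1.2, c.2 ++ F') | c <- deltaT K t']
          ++ [:: (-1, [:: t'], F')]
      end in
    (1, [:: t], [::]) :: [seq (c.1.1, c.1.2, [:: Node c.2]) | c <- deltaF F]
  end.

Fixpoint deltaF (K : fieldType) (F : pforest) : seq (K * pforest * pforest) :=
  match F with
  | [::] => [:: (1, [::], [::])]
  | t' :: F' =>
      [seq (c.1.1, t' :: c.1.2, c.2) | c <- deltaF K F']
      ++ [seq (c.1.1, c.1.2, c.2 ++ F') | c <- deltaT K t']
      ++ [:: (-1, [:: t'], F')]
  end.

(* The pairing <F, G> on basis forests (extended bilinearly), computed from
   <1, x> = eps(x),  <x y, z> = <y (x) x, Delta(z)>,  <B^+(x), y> = <x, gamma(y)>
   (with x = the first tree, y = the remaining nonempty forest). *)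
Fixpoint pairT (K : fieldType) (t : ptree) (G : pforest) : K :=
  match t with
  | Node F =>
    let fix pairF (F : pforest) (G : pforest) : K :=
      match F with
      | [::] => eps K G
      | [:: t'] => pairT K t' G
      | t' :: F' =>
          \sum_(c <- deltaF K G) c.1.1 * pairF F' c.1.2 * pairT K t' c.2
      end in
    match gamma G with Some G' => pairF F G' | None => 0 end
  end.

Fixpoint pairing (K : fieldType) (F : pforest) (G : pforest) : K :=
  match F with
  | [::] => eps K G
  | [:: t'] => pairT K t' G
  | t' :: F' =>
      \sum_(c <- deltaF K G) c.1.1 * pairing K F' c.1.2 * pairT K t' c.2
  end.

(* The map m: m(1) = 1, m(B^+(F1) F2) = B^+(m(F2)) m(F1).
   Written as a right fold  m(t F2) = mstep t (m F2)  with
   mstep (B^+(F1)) R = B^+(R) m(F1), to satisfy the guard checker. *)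
Fixpoint mstep (t : ptree) (R : pforest) : pforest :=
  match t with
  | Node F1 =>
    let fix mF (F : pforest) : pforest :=
      match F with [::] => [::] | t' :: F' => mstep t' (mF F') end in
    Node R :: mF F1
  end.

Definition mmap (F : pforest) : pforest := foldr mstep [::] F.

Lemma mmap_nil : mmap [::] = [::].
Proof. by []. Qed.

Lemma mmap_cons (F1 F2 : pforest) :
  mmap (Node F1 :: F2) = Node (mmap F2) :: mmap F1.
Proof.
rewrite /mmap /=; congr (_ :: _); by elim: F1 => //= t F1 ->.
Qed.

(* Admissible transformations.  [adm_root]: s is the leftmost child of a
   root u; the subtree at s becomes a new tree just left of u's tree.
   [adm_deep]: the transformation takes place inside the forest of children
   of some vertex r (so the subtree at s becomes a child of r just left of u). *)
Inductive adm_step : pforest -> pforest -> Prop :=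
| adm_root (A B : pforest) (s : ptree) (C : pforest) :
    adm_step (A ++ Node (s :: C) :: B) (A ++ s :: Node C :: B)
| adm_deep (A B F F' : pforest) :
    adm_step F F' -> adm_step (A ++ Node F :: B) (A ++ Node F' :: B).

Definition forest_le (F G : pforest) : Prop := clos_refl_trans _ adm_step F G.

(* The coproduct is multiplicity free: Delta(G) = sum_k G'_k (x) G''_k, where the
   k-th cut puts the first k vertices of G in postorder on the left.  Hence
   <t F, G> = sum_k <F, G'_k> <t, G''_k>, and by induction on the number of
   vertices of the left argument <F, G> is 1 if m(G) <= F and 0 otherwise.  For
   the induction step: m exchanges the two sides of a cut (it reverses the
   postorder), admissible transformations are compatible with cuts, and H <= t F
   iff the cut of H with |t| vertices on the right has its parts below t and F.
   Since <= preserves the number of vertices, only that cut contributes. *)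
From mathcomp Require Import all_boot all_algebra zify.
From Stdlib Require Import Relations.

Set Implicit Arguments.
Unset Strict Implicit.
Unset Printing Implicit Defensive.

Import GRing.Theory.

Arguments mmap : simpl never.

Fixpoint nvertT (t : ptree) : nat := let: Node X := t in (sumn (map nvertT X)).+1.
Definition nvert (G : pforest) : nat := sumn (map nvertT G).

Lemma nvert_nil : nvert [::] = 0. Proof. by []. Qed.

Lemma nvert_cons X G : nvert (Node X :: G) = (nvert X).+1 + nvert G.
Proof. by []. Qed.

Lemma nvert1 X : nvert [:: Node X] = (nvert X).+1.
Proof. by rewrite nvert_cons nvert_nil addn0. Qed.

Lemma nvert_cat A B : nvert (A ++ B) = nvert A + nvert B.
Proof. by rewrite /nvert map_cat sumn_cat. Qed.

Arguments nvert : simpl never.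

Lemma forest_ind (P : pforest -> Prop) : P [::] ->
  (forall X G, P X -> P G -> P (Node X :: G)) -> forall G, P G.
Proof.
move=> P0 Pcons G; move: {2}(nvert G) (leqnn (nvert G)) => n.
elim: n G => [|n IH] [|[X] G] //; rewrite nvert_cons // => hG.
by apply: Pcons; apply: IH; lia.
Qed.

Lemma nvert_mmap G : nvert (mmap G) = nvert G.
Proof.
elim/forest_ind: G => [|X G IHX IHG] //; rewrite mmap_cons !nvert_cons IHX IHG; lia.
Qed.

Lemma mmap_eq_nil G : mmap G = [::] -> G = [::].
Proof. by case: G => // [[X] G]; rewrite mmap_cons. Qed.

(* [cut k G] is the pair (first k vertices of G in postorder, remaining vertices);
   the nested fixpoint is only there to please the guard checker. *)
Fixpoint cutT (t : ptree) : nat -> pforest * pforest :=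
  let: Node X := t in
  let fix cutF (X : pforest) (k : nat) : pforest * pforest :=
    match X with
    | [::] => ([::], [::])
    | t' :: X' =>
        if k <= (nvertT t').-1 then ((cutT t' k).1, Node (cutT t' k).2 :: X')
        else (t' :: (cutF X' (k - nvertT t')).1, (cutF X' (k - nvertT t')).2)
    end in cutF X.

Definition cut (k : nat) (G : pforest) : pforest * pforest := cutT (Node G) k.

Lemma cut_nil k : cut k [::] = ([::], [::]). Proof. by []. Qed.

Lemma cut_cons k X G : cut k (Node X :: G) =
  if k <= nvert X then ((cut k X).1, Node (cut k X).2 :: G)
  else (Node X :: (cut (k - (nvert X).+1) G).1, (cut (k - (nvert X).+1) G).2).
Proof. by []. Qed.

Arguments cut : simpl never.

Lemma cut_consL k X G : k <= nvert X ->
  cut k (Node X :: G) = ((cut k X).1, Node (cut k X).2 :: G).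
Proof. by move=> hk; rewrite cut_cons hk. Qed.

Lemma cut_consR k X G : nvert X < k ->
  cut k (Node X :: G) = (Node X :: (cut (k - (nvert X).+1) G).1, (cut (k - (nvert X).+1) G).2).
Proof. by move=> hk; rewrite cut_cons leqNgt hk. Qed.

Lemma cut0 G : cut 0 G = ([::], G).
Proof. by elim/forest_ind: G => [|X G IHX _] //; rewrite cut_consL // IHX. Qed.

Lemma nvert_cut k G :
  nvert (cut k G).1 = minn k (nvert G) /\ nvert (cut k G).2 = nvert G - k.
Proof.
elim/forest_ind: G k => [|X G IHX IHG] k; first by rewrite cut_nil minn0.
rewrite cut_cons nvert_cons; case: ifP => hk /=.
  by rewrite nvert_cons; have [-> ->] := IHX k; split; lia.
by rewrite nvert_cons; have [-> ->] := IHG (k - (nvert X).+1); split; lia.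
Qed.

Lemma cut_cat k A B : cut k (A ++ B) =
  if k <= nvert A then ((cut k A).1, (cut k A).2 ++ B)
  else (A ++ (cut (k - nvert A) B).1, (cut (k - nvert A) B).2).
Proof.
elim: A k => [|[X] A IH] k /=.
  by rewrite nvert_nil subn0; case: k => [|k]; [rewrite cut0 | case: (cut _ B)].
rewrite !cut_cons nvert_cons IH.
case: (leqP k (nvert X)) => hX; first by have -> : k <= (nvert X).+1 + nvert A by lia.
case: (leqP k ((nvert X).+1 + nvert A)) => hA /=.
  by have -> : k - (nvert X).+1 <= nvert A by lia.
have -> : (k - (nvert X).+1 <= nvert A) = false by lia.
by rewrite subnDA.
Qed.

Lemma cut_nil_left k X : (cut k X).1 = [::] -> (cut k X).2 = X.
Proof.
elim/forest_ind: X k => [|Y X IHY IHX] k; first by rewrite cut_nil.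
case: (leqP k (nvert Y)) => hk; last by rewrite cut_consR.
by rewrite cut_consL //= => /IHY ->.
Qed.

Lemma mmap_cut k G :
  mmap (cut k G).1 = (cut (nvert G - k) (mmap G)).2 /\
  mmap (cut k G).2 = (cut (nvert G - k) (mmap G)).1.
Proof.
elim/forest_ind: G k => [|X G IHX IHG] k; first by rewrite cut_nil.
rewrite mmap_cons nvert_cons cut_cons cut_cons nvert_mmap; case: ifP => hk /=.
  rewrite mmap_cons; have [-> ->] := IHX k.
  have -> : ((nvert X).+1 + nvert G - k <= nvert G) = false by lia.
  by have -> : (nvert X).+1 + nvert G - k - (nvert G).+1 = nvert X - k by lia.
rewrite mmap_cons; have [-> ->] := IHG (k - (nvert X).+1).
have -> : ((nvert X).+1 + nvert G - k <= nvert G) = true by lia.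
by have -> : (nvert X).+1 + nvert G - k = nvert G - (k - (nvert X).+1) by lia.
Qed.

Section Coproduct.

Variable K : fieldType.
Local Open Scope ring_scope.

Lemma deltaT_Node X : deltaT K (Node X) =
  (1, [:: Node X], [::]) :: [seq (c.1.1, c.1.2, [:: Node c.2]) | c <- deltaF K X].
Proof. by rewrite /=; congr (_ :: _); congr map; elim: X => //= t X ->. Qed.

Lemma deltaF_cons t G : deltaF K (t :: G) =
  [seq (c.1.1, t :: c.1.2, c.2) | c <- deltaF K G]
  ++ [seq (c.1.1, c.1.2, c.2 ++ G) | c <- deltaT K t]
  ++ [:: (-1, [:: t], G)].
Proof. by []. Qed.

Lemma pairT_Node X G : pairT K (Node X) G =
  if gamma G is Some G' then pairing K X G' else 0.
Proof.
rewrite /=; case: (gamma G) => // G'.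
elim: X G' => [|t [|t' X] IH] G' //=.
by apply: eq_bigr => c _; rewrite IH.
Qed.

Lemma pairing1 t G : pairing K [:: t] G = pairT K t G.
Proof. by []. Qed.

Lemma pairing_cons t t' F G : pairing K (t :: t' :: F) G =
  \sum_(c <- deltaF K G) c.1.1 * pairing K (t' :: F) c.1.2 * pairing K [:: t] c.2.
Proof. by []. Qed.

(* The term [-1, [:: t], G] of Delta(t G) cancels the duplicated cut that puts
   exactly the tree t on the left. *)
Lemma sum_deltaF (f g : pforest -> K) G :
  \sum_(c <- deltaF K G) c.1.1 * f c.1.2 * g c.2 =
  \sum_(k <- iota 0 (nvert G).+1) f (cut k G).1 * g (cut k G).2.
Proof.
elim/forest_ind: G f g => [|X G IHX IHG] f g.
  by rewrite big_seq1 big_seq1 cut0 mul1r.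
rewrite deltaF_cons deltaT_Node !big_cat big_cons big_seq1 !big_map.
rewrite (IHG (fun a => f (Node X :: a)) g) (IHX f (fun b => g (Node b :: G))).
rewrite nvert_cons -addnS iotaD big_cat add0n.
have -> : iota (nvert X).+1 (nvert G).+1 = map (addn (nvert X).+1) (iota 0 (nvert G).+1).
  by rewrite -iotaDl addn0.
rewrite big_map /= -/(iota 0 (nvert X).+1) -/(iota 0 (nvert G).+1).
rewrite mul1r mulN1r mulNr [f _ * g G + _]addrC addrK addrC.
congr (_ + _); apply: eq_big_seq => k.
  by rewrite mem_iota => hk; rewrite cut_consL //; lia.
by rewrite cut_consR ?addKn //; lia.
Qed.

End Coproduct.

Lemma adm_step_nvert F G : adm_step F G -> nvert G = nvert F.
Proof.
elim=> [A B [S] C|A B F0 F1 _ IH]; rewrite !nvert_cat !nvert_cons ?IH //; lia.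
Qed.

Lemma forest_le_nvert F G : forest_le F G -> nvert G = nvert F.
Proof. by elim=> [x y /adm_step_nvert|x|x y z _ -> _ ->]. Qed.

Lemma adm_step_catl A F G : adm_step F G -> adm_step (A ++ F) (A ++ G).
Proof. by case=> [A0 B s C|A0 B F0 F1 hF]; rewrite !catA; constructor. Qed.

Lemma adm_step_catr B F G : adm_step F G -> adm_step (F ++ B) (G ++ B).
Proof. by case=> [A0 B0 s C|A0 B0 F0 F1 hF]; rewrite -!catA /=; constructor. Qed.

Lemma adm_step_neq_nil F G : adm_step F G -> G <> [::].
Proof. by case=> [A B s C|A B F0 F1 _]; case: A. Qed.

Lemma forest_le_catl A F G : forest_le F G -> forest_le (A ++ F) (A ++ G).
Proof.
elim=> [x y h|x|x y z _ h1 _ h2]; last exact: rt_trans h2.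
  by apply: rt_step; apply: adm_step_catl.
exact: rt_refl.
Qed.

Lemma forest_le_catr B F G : forest_le F G -> forest_le (F ++ B) (G ++ B).
Proof.
elim=> [x y h|x|x y z _ h1 _ h2]; last exact: rt_trans h2.
  by apply: rt_step; apply: adm_step_catr.
exact: rt_refl.
Qed.

Lemma forest_le_cat A A' B B' :
  forest_le A A' -> forest_le B B' -> forest_le (A ++ B) (A' ++ B').
Proof. by move=> hA hB; apply: rt_trans (forest_le_catr B hA) (forest_le_catl A' hB). Qed.

Lemma forest_le_Node X Y B : forest_le X Y -> forest_le (Node X :: B) (Node Y :: B).
Proof.
elim=> [x y h|x|x y z _ h1 _ h2]; last exact: rt_trans h2.
  exact: rt_step (adm_deep [::] B h).
exact: rt_refl.
Qed.

Lemma forest_le_nil F : forest_le F [::] -> F = [::].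
Proof.
move=> hF; have {hF} h := clos_rt_rtn1 _ _ _ _ hF.
inversion h as [|G ? hG]; first by [].
by have := adm_step_neq_nil hG.
Qed.

Lemma adm_step_tree1 F X : adm_step F [:: Node X] ->
  exists2 Y, F = [:: Node Y] & adm_step Y X.
Proof.
move e: [:: Node X] => G hFG; case: hFG e => [A B s C|A B F0 F1 hF].
  by move/(congr1 size); rewrite size_cat /=; lia.
case: A => [|a A] /=; last by move/(congr1 size); rewrite /= size_cat /=; lia.
by case=> -> <-; exists F0.
Qed.

Lemma forest_le_tree1 F X : forest_le F [:: Node X] ->
  exists2 Y, F = [:: Node Y] & forest_le Y X.
Proof.
move=> hF; have {hF} := clos_rt_rt1n _ _ _ _ hF; move e: [:: Node X] => G hFG.
elim: hFG e => [x <-|x y z hxy _ IH e]; first by exists X; last exact: rt_refl.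
have [Y1 ey hY1] := IH e; rewrite ey in hxy.
have [Y -> hY] := adm_step_tree1 hxy.
by exists Y => //; apply: rt_trans hY1; apply: rt_step.
Qed.

Notation adm_step_refl := (clos_refl _ adm_step).

Definition cutwise_adm_step (H H' : pforest) : Prop := forall k,
  adm_step_refl (cut k H).1 (cut k H').1 /\ adm_step_refl (cut k H).2 (cut k H').2.

Lemma adm_step_refl_catl A F G : adm_step_refl F G -> adm_step_refl (A ++ F) (A ++ G).
Proof. by case=> [G' h|]; [apply: r_step; apply: adm_step_catl | apply: r_refl]. Qed.

Lemma cutwise_adm_step_catl A H H' : adm_step H H' ->
  cutwise_adm_step H H' -> cutwise_adm_step (A ++ H) (A ++ H').
Proof.
move=> hH hcut k; rewrite !cut_cat; case: ifP => _ /=.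
  by split; [apply: r_refl | apply: r_step; apply: adm_step_catl].
by have [h1 h2] := hcut (k - nvert A); split; [apply: adm_step_refl_catl |].
Qed.

Lemma cutwise_adm_root s C B :
  cutwise_adm_step (Node (s :: C) :: B) (s :: Node C :: B).
Proof.
case: s => S k.
case: (leqP k (nvert S)) => hS.
  rewrite cut_consL; last by rewrite nvert_cons; lia.
  by rewrite !cut_consL //=; split; [apply: r_refl | apply: r_step; exact: (adm_root [::] _ _ C)].
case: (leqP k (nvert (Node S :: C))) => hSC.
  rewrite cut_consL // !(cut_consR _ hS) cut_consL /=; last by rewrite nvert_cons in hSC; lia.
  by split; apply: r_refl.
rewrite !cut_consR //=; last by rewrite nvert_cons in hSC; lia.
have -> : k - (nvert S).+1 - (nvert C).+1 = k - (nvert (Node S :: C)).+1 by rewrite nvert_cons; lia.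
by split; [apply: r_step; exact: (adm_root [::] _ _ C) | apply: r_refl].
Qed.

Lemma cutwise_adm_deep F F' B : adm_step F F' -> cutwise_adm_step F F' ->
  cutwise_adm_step (Node F :: B) (Node F' :: B).
Proof.
move=> hF hcut k; have hsize := adm_step_nvert hF.
case: (leqP k (nvert F)) => hk; last first.
  rewrite !cut_consR ?hsize //=.
  by split; [apply: r_step; exact: (adm_deep [::] _ hF) | apply: r_refl].
rewrite !cut_consL ?hsize //=; have [h1 h2] := hcut k; split=> //.
by case: h2 => [G h|]; [apply: r_step; apply: (adm_deep [::] B h) | apply: r_refl].
Qed.

Lemma adm_step_cutwise H H' : adm_step H H' -> cutwise_adm_step H H'.
Proof.
elim=> [A B s C|A B F1 F2 hF IH]; apply: cutwise_adm_step_catl.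
- exact: (adm_root [::] B s C).
- exact: cutwise_adm_root.
- exact: (adm_deep [::] B hF).
- exact: cutwise_adm_deep.
Qed.

Lemma forest_le_cut k H H' : forest_le H H' ->
  forest_le (cut k H).1 (cut k H').1 /\ forest_le (cut k H).2 (cut k H').2.
Proof.
have rt_of_refl F G : adm_step_refl F G -> forest_le F G.
  by case=> [G' h|]; [apply: rt_step | apply: rt_refl].
elim=> [x y /adm_step_cutwise/(_ k) [h1 h2]|x|x y z _ [h1 h2] _ [h3 h4]].
- by split; apply: rt_of_refl.
- by split; apply: rt_refl.
- by split; [apply: rt_trans h3 | apply: rt_trans h4].
Qed.

Lemma forest_le_cut_tree1 k H t :
  (cut k H).1 = [:: t] -> forest_le H (t :: (cut k H).2).
Proof.
elim/forest_ind: H k => [|Y H IHY IHH] k; first by rewrite cut_nil.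
case: (leqP k (nvert Y)) => hk.
  rewrite cut_consL //= => /IHY hY; apply: rt_trans (forest_le_Node H hY) _.
  exact: rt_step (adm_root [::] H t _).
by rewrite cut_consR //= => -[<-] /cut_nil_left ->; apply: rt_refl.
Qed.

Lemma forest_le_consP X F H : forest_le H (Node X :: F) <->
  forest_le (cut (nvert X).+1 H).1 [:: Node X] /\ forest_le (cut (nvert X).+1 H).2 F.
Proof.
split; first by move/(forest_le_cut (nvert X).+1); rewrite cut_consR // subnn cut0.
case=> /forest_le_tree1 [Y eY hY] hF; apply: rt_trans (forest_le_cut_tree1 eY) _.
exact: forest_le_cat (forest_le_Node [::] hY) hF.
Qed.

Lemma forest_le_tree1P X Y : forest_le [:: Node Y] [:: Node X] <-> forest_le Y X.
Proof.
split; last exact: forest_le_Node.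
by case/forest_le_tree1=> Y' [<-].
Qed.

Section Pairing.

Variable K : fieldType.
Local Open Scope ring_scope.

Definition indicator (P : Prop) (x : K) : Prop := (P /\ x = 1) \/ (~ P /\ x = 0).

Lemma indicator1 (P : Prop) : P -> indicator P 1.
Proof. by left. Qed.

Lemma indicator0 (P : Prop) : ~ P -> indicator P 0.
Proof. by right. Qed.

Lemma indicator_iff (P Q : Prop) x : (P <-> Q) -> indicator P x -> indicator Q x.
Proof. by move=> [hPQ hQP] [[/hPQ hQ ->]|[hP ->]]; [left | right; split=> // /hQP]. Qed.

Lemma indicator_mul (P Q : Prop) x y :
  indicator P x -> indicator Q y -> indicator (P /\ Q) (x * y).
Proof.
case=> [[hP ->]|[hP ->]] hy; last by rewrite mul0r; apply: indicator0 => -[/hP].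
by rewrite mul1r; apply: indicator_iff hy; split=> // -[].
Qed.

Definition pairing_indicator (F G : pforest) : Prop :=
  indicator (forest_le (mmap G) F) (pairing K F G).

Lemma pairing_indicator_nil G : pairing_indicator [::] G.
Proof.
case: G => [|t G]; rewrite /pairing_indicator /=; first exact/indicator1/rt_refl.
by apply: indicator0 => /forest_le_nil/mmap_eq_nil.
Qed.

Lemma pairing_indicator_tree X :
  (forall G, pairing_indicator X G) -> forall G, pairing_indicator [:: Node X] G.
Proof.
move=> IHX [|[[|y Y]] G]; rewrite /pairing_indicator pairing1 pairT_Node /=.
- by apply: indicator0 => /forest_le_tree1 [].
- by rewrite mmap_cons; apply: indicator_iff (IHX G); rewrite forest_le_tree1P.
- by apply: indicator0; rewrite mmap_cons => /forest_le_tree1 [? [_ /mmap_eq_nil]].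
Qed.

Lemma pairing_tree_cut_eq0 X G k :
  (forall H, pairing_indicator [:: Node X] H) ->
  (nvert G - k != (nvert X).+1)%N -> pairing K [:: Node X] (cut k G).2 = 0.
Proof.
move=> IH1 hk; case: (IH1 (cut k G).2) => [[/forest_le_nvert] | [_ ->] //].
by rewrite nvert_mmap nvert1 (nvert_cut k G).2 => /esym/eqP; rewrite (negbTE hk).
Qed.

Lemma pairing_indicator_cons X t F :
  (forall G, pairing_indicator (t :: F) G) ->
  (forall G, pairing_indicator [:: Node X] G) ->
  forall G, pairing_indicator (Node X :: t :: F) G.
Proof.
move=> IHF IH1 G; rewrite /pairing_indicator pairing_cons sum_deltaF.
have [hG|hG] := leqP (nvert X).+1 (nvert G); last first.
  rewrite big1 => [|k _]; last by rewrite pairing_tree_cut_eq0 ?mulr0 //; lia.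
  apply: indicator0 => /forest_le_nvert; rewrite nvert_mmap !nvert_cons; lia.
set k0 := (nvert G - (nvert X).+1)%N.
rewrite (bigD1_seq k0) ?iota_uniq //; last by rewrite mem_iota; lia.
rewrite big1 ?Monoid.mulm1 => [|k /eqP hk]; last by rewrite pairing_tree_cut_eq0 ?mulr0 //; lia.
have [e1 e2] := mmap_cut k0 G; rewrite subKn // in e1 e2.
apply: indicator_iff (indicator_mul (IHF _) (IH1 _)).
split=> [[h1 h2] | /forest_le_consP]; last by rewrite -e1 -e2; case.
by apply/forest_le_consP; rewrite -e1 -e2.
Qed.

Lemma pairing_indicator_holds F G : pairing_indicator F G.
Proof.
move: {2}(nvert F) (leqnn (nvert F)) => n; elim: n F G => [|n IH].
  by case=> [|[X] F] G; rewrite ?nvert_cons // => _; exact: pairing_indicator_nil.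
case=> [|[X] [|[Y] F]] G hF; first exact: pairing_indicator_nil.
  by apply: pairing_indicator_tree => G'; apply: IH; rewrite nvert1 in hF.
rewrite !nvert_cons in hF.
by apply: pairing_indicator_cons => G'; apply: IH; rewrite ?nvert1 ?nvert_cons; lia.
Qed.

End Pairing.

Local Open Scope ring_scope.

Theorem theorem37 (K : fieldType) (F G : pforest) :
  [<-> pairing K F G != 0; pairing K F G = 1; forest_le (mmap G) F].
Proof.
have [[hle ->]|[hle ->]] := pairing_indicator_holds K F G; tfae=> //.
- by rewrite oner_eq0.
- by rewrite eqxx.
- by move/esym/eqP; rewrite oner_eq0.
Qed.
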